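(* Let $n,k$ be integers with $n\geq k+1\geq 2$. Then $E_n(as_k)=\frac{4(n-k)+5}{6}$ holds if and only if $E_n(zs_k)=\frac{2(n-k)+4}{3}$ holds.
   Context: $\mathfrak{S}_n$ is the set of permutations $w=w_1\cdots w_n$ of $\{1,\dots,n\}$. A subsequence $w_{i_1}\cdots w_{i_s}$ ($i_1<\dots<i_s$) is alternating if $w_{i_1}>w_{i_2}<w_{i_3}>\cdots$, reverse alternating if $w_{i_1}<w_{i_2}>w_{i_3}<\cdots$, and zigzagging if it is alternating or reverse alternating. It is $k$-alternating (resp. $k$-zigzagging) if it is alternating (resp. zigzagging) and $|w_{i_j}-w_{i_{j+1}}|\geq k$ for all $j$. $as_k(w)$ (resp. $zs_k(w)$) is the maximal length of a $k$-alternating (resp. $k$-zigzagging) subsequence of $w$. $E_n(as_k)=\frac1{n!}\sum_{w\in\mathfrak{S}_n}as_k(w)$ and $E_n(zs_k)=\frac1{n!}\sum_{w\in\mathfrak{S}_n}zs_k(w)$. *)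

From mathcomp Require Import all_boot all_order all_algebra all_fingroup.
Set Implicit Arguments. Unset Strict Implicit. Unset Printing Implicit Defensive.
Import GRing.Theory Num.Theory.

(* A permutation s : 'S_n of {0,..,n-1} represents w = w_1...w_n with
   w_{i+1} = s i + 1 (values in {1,..,n}). *)
Definition wval (n : nat) (s : 'S_n) (i : 'I_n) : nat := (s i).+1.

Definition subs (n : nat) (s : 'S_n) (A : {set 'I_n}) : seq nat :=
  [seq wval s i | i <- enum A].

Definition alternating (t : seq nat) : bool :=
  [forall j : 'I_(size t),
     (j.+1 < size t) ==>
       (if odd j then nth 0 t j < nth 0 t j.+1 else nth 0 t j > nth 0 t j.+1)].

Definition rev_alternating (t : seq nat) : bool :=
  [forall j : 'I_(size t),
     (j.+1 < size t) ==>
       (if odd j then nth 0 t j > nth 0 t j.+1 else nth 0 t j < nth 0 t j.+1)].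

Definition zigzagging (t : seq nat) : bool := alternating t || rev_alternating t.

(* |a - b| on nat (truncated subtractions, one of them is 0) *)
Definition absdiff (a b : nat) : nat := (a - b) + (b - a).

Definition gaps_ge (k : nat) (t : seq nat) : bool :=
  [forall j : 'I_(size t),
     (j.+1 < size t) ==> (k <= absdiff (nth 0 t j) (nth 0 t j.+1))].

Definition k_alternating (k : nat) (t : seq nat) : bool :=
  alternating t && gaps_ge k t.
Definition k_zigzagging (k : nat) (t : seq nat) : bool :=
  zigzagging t && gaps_ge k t.

Definition as_k (k n : nat) (s : 'S_n) : nat :=
  \max_(A : {set 'I_n} | k_alternating k (subs s A)) #|A|.
Definition zs_k (k n : nat) (s : 'S_n) : nat :=
  \max_(A : {set 'I_n} | k_zigzagging k (subs s A)) #|A|.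

Definition E_as (n k : nat) : rat :=
  ((\sum_(s : 'S_n) (as_k k s)%:R) / (n`!)%:R)%R.
Definition E_zs (n k : nat) : rat :=
  ((\sum_(s : 'S_n) (zs_k k s)%:R) / (n`!)%:R)%R.

From mathcomp Require Import all_boot all_order all_algebra all_fingroup.
From mathcomp Require Import zify ring lra.
Set Implicit Arguments. Unset Strict Implicit. Unset Printing Implicit Defensive.
Import GRing.Theory Num.Theory.

(* For a word w let a(w) and b(w) be the maximal lengths of
   k-zigzagging subsequences starting with a descent, resp. an ascent, so
   that as_k = a and zs_k = max a b.  Dropping the first letter shows
   |a - b| <= 1, and an exchange argument on the first two letters of
   optimal subsequences shows a <> b as soon as k < n; hence
   2 zs_k = a + b + 1.  Complementing the values w_i |-> n + 1 - w_i swaps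
   a and b, so a and b have the same average over S_n, and therefore
   E_n(zs_k) = E_n(as_k) + 1/2.  The two equations are then equivalent. *)

Definition kstep (up : bool) (k x y : nat) : bool :=
  if up then x + k <= y else y + k <= x.

Fixpoint kzigzag (up : bool) (k : nat) (t : seq nat) : bool :=
  match t with
  | x :: ((y :: _) as t') => kstep up k x y && kzigzag (~~ up) k t'
  | _ => true
  end.

Lemma kstepNC up k x y : kstep (~~ up) k x y = kstep up k y x.
Proof. by case: up. Qed.

Lemma kzigzagP up k t :
  reflect (forall j, j.+1 < size t -> kstep (odd j (+) up) k (nth 0 t j) (nth 0 t j.+1))
          (kzigzag up k t).
Proof.
elim: t up => [|x [|y t] IH] up /=; try by constructor.
apply: (iffP andP) => [[hxy /IH ht] [|j] hj | h] //=.
- by rewrite addNb -addbN; apply: ht.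
- split; first exact: (h 0).
  by apply/IH => j hj; rewrite addbN -addNb; apply: (h j.+1).
Qed.

Lemma kzigzag_compl N up k t : all (fun v => v <= N) t ->
  kzigzag up k [seq N - v | v <- t] = kzigzag (~~ up) k t.
Proof.
elim: t up => [|x [|y t] IH] up //= /and3P [hx hy ht].
have := IH (~~ up); rewrite /= hy ht => -> //.
by congr (_ && _); case: up => /=; lia.
Qed.

Section AlternatingAsKzigzag.

Variables (k : nat) (t : seq nat).
Hypothesis k_gt0 : 0 < k.

Lemma alternating_kzigzag up :
  (if up then rev_alternating t else alternating t) && gaps_ge k t = kzigzag up k t.
Proof.
case: up; apply/idP/kzigzagP => [/andP [/forallP ha /forallP hg] j hj | h].
1,3: have hj' : j < size t by apply: ltnW.
1,2: by move: (ha (Ordinal hj')) (hg (Ordinal hj')); rewrite /= hj /absdiff /kstep;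
  case: (odd j) => /=; lia.
all: apply/andP; split; apply/forallP => j; apply/implyP => hj; move: (h j hj);
  rewrite /absdiff /kstep; case: (odd j) => /=; lia.
Qed.

Lemma k_alternating_kzigzag : k_alternating k t = kzigzag false k t.
Proof. exact: (alternating_kzigzag false). Qed.

Lemma k_zigzagging_kzigzag : k_zigzagging k t = kzigzag false k t || kzigzag true k t.
Proof.
rewrite -(alternating_kzigzag false) -(alternating_kzigzag true).
by rewrite /k_zigzagging /zigzagging andb_orl orbC.
Qed.

End AlternatingAsKzigzag.

Section LongestSubsequence.

Variable n : nat.
Implicit Types (w : 'I_n -> nat) (P : pred (seq nat)) (l : seq 'I_n).

Definition longest P w : nat :=
  \max_(A : {set 'I_n} | P [seq w i | i <- enum A]) #|A|.

Lemma sorted_enum_set (A : {set 'I_n}) : sorted ltn (map val (enum A)).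
Proof.
rewrite -[enum _](eq_filter (mem_enum _)) -(eq_filter (mem_map val_inj _)).
by rewrite -filter_map (sorted_filter ltn_trans) // unlock val_ord_enum iota_ltn_sorted.
Qed.

Lemma enum_set_sorted l : sorted ltn (map val l) -> enum [set i in l] = l.
Proof.
move=> hl; apply: (inj_map val_inj).
apply: (irr_sorted_eq ltn_trans ltnn) => //; first exact: sorted_enum_set.
by move=> y; apply/mapP/mapP => -[x hx ->]; exists x => //; move: hx; rewrite mem_enum inE.
Qed.

Lemma longest_ub P w l :
  sorted ltn (map val l) -> P (map w l) -> size l <= longest P w.
Proof.
move=> hl hP; rewrite -(enum_set_sorted hl) -cardE.
by apply: leq_bigmax_cond; rewrite enum_set_sorted.
Qed.

Lemma longest_witness P w : P [::] ->
  exists l, [/\ sorted ltn (map val l), P (map w l) & size l = longest P w].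
Proof.
move=> P0; have P_set0 : P [seq w i | i <- enum set0] by rewrite enum_set0.
rewrite /longest (bigmax_eq_arg _ P_set0); case: arg_maxnP => //= A hA _.
by exists (enum A); rewrite -cardE; split=> //; apply: sorted_enum_set.
Qed.

Lemma longest_predU P Q w :
  longest (predU P Q) w = maxn (longest P w) (longest Q w).
Proof.
apply/eqP; rewrite eqn_leq geq_max; apply/and3P; split.
- apply/bigmax_leqP => A /orP [hA|hA]; rewrite leq_max; apply/orP; [left|right];
    exact: leq_bigmax_cond.
- by apply/bigmax_leqP => A hA; apply: leq_bigmax_cond; rewrite /= hA.
- by apply/bigmax_leqP => A hA; apply: leq_bigmax_cond; rewrite /= hA orbT.
Qed.

Lemma eq_longest P w w' : w =1 w' -> longest P w = longest P w'.
Proof. by move=> eq_w; apply: eq_bigl => A; rewrite /= (eq_map eq_w). Qed.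

Lemma longest_kzigzag_compl N up k w : (forall i, w i <= N) ->
  longest (kzigzag up k) (fun i => N - w i) = longest (kzigzag (~~ up) k) w.
Proof.
move=> wN; apply: eq_bigl => A; rewrite /= (map_comp (fun v => N - v)) kzigzag_compl //.
by apply/allP => _ /mapP [i _ ->].
Qed.

Section Kzigzag.

Variables (k : nat) (w : 'I_n -> nat).
Hypothesis k_gt0 : 0 < k.

Local Notation a up := (longest (kzigzag up k) w).

Definition kzigzag_at up l : bool :=
  sorted ltn (map val l) && kzigzag up k (map w l).

Lemma kzigzag_at_ub up l : kzigzag_at up l -> size l <= a up.
Proof. by case/andP; apply: longest_ub. Qed.

Lemma kzigzag_at_witness up : exists2 l, kzigzag_at up l & size l = a up.
Proof.
have [l [hl hz <-]] := @longest_witness (kzigzag up k) w isT.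
by exists l => //; apply/andP.
Qed.

Lemma kzigzag_at_cons2 up i p l : kzigzag_at up [:: i, p & l] =
  [&& i < p, kstep up k (w i) (w p) & kzigzag_at (~~ up) (p :: l)].
Proof.
by rewrite /kzigzag_at /=; case: (i < p); case: (kstep _ _ _ _); case: (path _ _ _).
Qed.

Lemma kzigzag_at_behead up p l : kzigzag_at up (p :: l) -> kzigzag_at (~~ up) l.
Proof. by case: l => [|q l] //; rewrite kzigzag_at_cons2 => /and3P []. Qed.

Lemma kzigzag_at_cross up p q l l' :
  kzigzag_at up (p :: l) -> kzigzag_at (~~ up) (q :: l') -> kstep up k (w p) (w q) ->
  kzigzag_at up [:: p, q & l'] \/ kzigzag_at (~~ up) [:: q, p & l].
Proof.
move=> hp hq step_pq; rewrite !kzigzag_at_cons2 negbK kstepNC step_pq hp hq !andbT.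
case: (ltngtP p q) => [|_|eq_pq]; [by left | by right|].
by move: step_pq; rewrite (val_inj eq_pq) /kstep; case: (up) => /=; lia.
Qed.

(* Exchange argument: the first two letters of optimal descent-first and
   ascent-first subsequences can always be recombined into a longer one. *)
Lemma kzigzag_at_exchange la lb :
  kzigzag_at false la -> kzigzag_at true lb -> 2 <= size la -> 2 <= size lb ->
  size la < a true \/ size lb < a false.
Proof.
case: la lb => [|pa1 [|pa2 ta]] // [|pb1 [|pb2 tb]] // ha hb _ _.
have [step_ab | step_ba] := leqP (w pb1 + k) (w pa1).
  have [] := kzigzag_at_cross ha hb step_ab => /kzigzag_at_ub; [right | left] => //.
move: ha hb; rewrite !kzigzag_at_cons2 => /and3P [lt_a1 step_a ha] /and3P [lt_b1 step_b hb].
have step_a2b2 : kstep true k (w pa2) (w pb2) by move: step_a step_b; rewrite /kstep; lia.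
have [] := kzigzag_at_cross ha hb step_a2b2 => [h2 | h2].
- right; apply: (@kzigzag_at_ub false [:: pa1, pa2, pb2 & tb]).
  by rewrite kzigzag_at_cons2 lt_a1 step_a.
- left; apply: (@kzigzag_at_ub true [:: pb1, pb2, pa2 & ta]).
  by rewrite kzigzag_at_cons2 lt_b1 step_b.
Qed.

Lemma longest_kzigzag_le_succ up : a up <= (a (~~ up)).+1.
Proof.
have [[|p l] hl <-] := kzigzag_at_witness up => //.
exact: (kzigzag_at_ub (kzigzag_at_behead hl)).
Qed.

Lemma longest_kzigzag_neq : 2 <= maxn (a false) (a true) -> a false != a true.
Proof.
move=> a_ge2; apply/eqP => eq_a; rewrite -eq_a maxnn in a_ge2.
have [la hla sa] := kzigzag_at_witness false.
have [lb hlb sb] := kzigzag_at_witness true.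
by have [] := kzigzag_at_exchange hla hlb; rewrite ?sa ?sb -?eq_a ?ltnn.
Qed.

Lemma longest_kzigzag_ge2 i j : w i + k <= w j -> 2 <= maxn (a false) (a true).
Proof.
move=> step_ij; rewrite leq_max.
case: (ltngtP i j) => [lt_ij | lt_ji | eq_ij]; last by move: step_ij; rewrite (val_inj eq_ij); lia.
- by apply/orP; right; apply: (@kzigzag_at_ub true [:: i; j]); rewrite /kzigzag_at /= lt_ij /kstep step_ij.
- by apply/orP; left; apply: (@kzigzag_at_ub false [:: j; i]); rewrite /kzigzag_at /= lt_ji /kstep step_ij.
Qed.

Lemma double_maxn_longest_kzigzag :
  2 <= maxn (a false) (a true) -> (maxn (a false) (a true)).*2 = (a false + a true).+1.
Proof.
move=> /longest_kzigzag_neq /eqP neq_a.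
move: (longest_kzigzag_le_succ false) (longest_kzigzag_le_succ true) => /= le_ab le_ba.
by rewrite /maxn; case: ltnP => /=; lia.
Qed.

End Kzigzag.

End LongestSubsequence.

Section Permutations.

Variables (n k : nat).
Hypotheses (k_gt0 : 0 < k) (k_lt_n : k < n).

Local Notation a up s := (longest (kzigzag up k) (wval (s : 'S_n))).

Lemma as_k_longest s : as_k k s = a false s.
Proof. by apply: eq_bigl => A; rewrite k_alternating_kzigzag. Qed.

Lemma zs_k_longest s : zs_k k s = maxn (a false s) (a true s).
Proof. by rewrite -longest_predU; apply: eq_bigl => A; rewrite /= k_zigzagging_kzigzag. Qed.

Lemma longest_kzigzag_perm_ge2 s : 2 <= maxn (a false s) (a true s).
Proof.
have lt0n : 0 < n by apply: leq_ltn_trans k_lt_n.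
apply: (@longest_kzigzag_ge2 _ _ _ k_gt0 (s^-1 (Ordinal lt0n))%g (s^-1 (Ordinal k_lt_n))%g).
by rewrite /wval !permKV.
Qed.

Lemma sum_longest_kzigzag_compl up : \sum_(s : 'S_n) a up s = \sum_(s : 'S_n) a (~~ up) s.
Proof.
rewrite (reindex_inj (mulIg (perm (@rev_ord_inj n)))); apply: eq_bigr => s _.
have wval_rev i : wval (s * perm (@rev_ord_inj n)) i = n.+1 - wval s i.
  by rewrite /wval permM permE /= subSn.
by rewrite (eq_longest _ wval_rev); apply: longest_kzigzag_compl => i; apply/leqW/ltn_ord.
Qed.

Lemma double_sum_zs_k :
  (\sum_(s : 'S_n) zs_k k s).*2 = (\sum_(s : 'S_n) as_k k s).*2 + n`!.
Proof.
rewrite -!addnn -card_Sn -sum1_card -!big_split /=.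
rewrite (eq_bigr (fun s => as_k k s + a true s + 1)) => [|s _]; last first.
  rewrite addnn zs_k_longest double_maxn_longest_kzigzag ?longest_kzigzag_perm_ge2 //.
  by rewrite as_k_longest addn1.
rewrite !big_split /=; congr (_ + _ + _).
by rewrite sum_longest_kzigzag_compl; apply: eq_bigr => s _; rewrite as_k_longest.
Qed.

End Permutations.

Section Expectation.

Local Open Scope ring_scope.

Lemma E_zs_E_as (n k : nat) : (0 < k)%N -> (k < n)%N -> E_zs n k = E_as n k + 1 / 2.
Proof.
move=> k_gt0 k_lt_n.
have fact_neq0 : (n`!)%:R != 0 :> rat by rewrite pnatr_eq0 -lt0n fact_gt0.
have := congr1 (fun m => m%:R : rat) (double_sum_zs_k k_gt0 k_lt_n).
rewrite /E_zs /E_as /= -!muln2 natrD !natrM -!natr_sum => sum_eq.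
apply: (mulIf (_ : (2%:R : rat) != 0)) => //.
by rewrite mulrDl mulrAC sum_eq mulrAC; field.
Qed.

End Expectation.

Theorem lemma1p2 (n k : nat) (hk : 1 <= k) (hn : k.+1 <= n) :
  E_as n k = ((4 * (n - k) + 5)%:R / 6%:R)%R <->
  E_zs n k = ((2 * (n - k) + 4)%:R / 3%:R)%R.
Proof. by rewrite E_zs_E_as // !natrD; split=> h; lra. Qed.
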